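(* Assume the law of excluded middle. If $\alpha\in\mathrm{ord}$ is bounded, i.e. $\alpha\le\underline m$ for some $m\in\mathbb N$, then $\alpha$ is finite, i.e. $\alpha=_{\mathrm{Ord}}\underline n$ for some $n\in\mathbb N$.
   Context: Let $\mathfrak F$ be a set of index sets such that: $\mathbb N$ and each $\mathbb N_k=\{n\in\mathbb N:n<k\}$ ($k\ge 0$) belong to $\mathfrak F$; every finitely enumerated subset of an element of $\mathfrak F$ is isomorphic to an element of $\mathfrak F$; for $J\in\mathfrak F$ the set of finitely enumerated subsets of $J$ is isomorphic to an element of $\mathfrak F$; $\mathfrak F$ is stable under disjoint unions indexed by elements of $\mathfrak F$. A finitely enumerated subset of $A$ is one given by a map $\mathbb N_k\to A$; write $F\subseteq_f I$. The set $\mathrm{ord}$ is inductively generated by $\underline 0$ and, for every family $(\alpha_i)_{i\in I}$ with $I\in\mathfrak F$, $\alpha_i\in\mathrm{ord}$, an element $\mathrm S(\alpha_i)_{i\in I}$; for such $\alpha$, $I_\alpha=I$ and $\alpha_i$ are its definitional subordinals; $I_{\underline 0}=\emptyset$. $\mathrm{succ}(\beta)$ is $\mathrm S$ of the one-element family $(\beta)$, and $\underline{m+1}=\mathrm{succ}(\underline m)$. For a finite list $F$ in $I_\alpha$, $\alpha_F$ is the list of the $\alpha_i$, $i\in F$. Relations between an element and a nonempty finite list, by simultaneous induction: $\alpha\le\beta^1,\dots,\beta^m$ means $\alpha_i<\beta^1,\dots,\beta^m$ for all $i\in I_\alpha$; $\alpha<\beta^1,\dots,\beta^m$ means there exist $F_1\subseteq_f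 I_{\beta^1},\dots,F_m\subseteq_f I_{\beta^m}$, not all empty, with $\alpha\le\beta^1_{F_1},\dots,\beta^m_{F_m}$ (concatenated list). $\alpha=_{\mathrm{Ord}}\beta$ means $\alpha\le\beta$ and $\beta\le\alpha$. *)

From Stdlib Require Import List.
Import ListNotations.
Set Implicit Arguments.

(* A "set of index sets" F is presented as a Tarski-style universe:
   codes U, decoding El, together with distinguished codes for N and N_k. *)
Record IndexFamily := {
  U : Type;
  El : U -> Type;
  cN : U;
  cNk : nat -> U
}.

Definition Nk (k : nat) : Type := {n : nat | n < k}.

Definition iso (A B : Type) : Prop :=
  exists (f : A -> B) (g : B -> A),
    (forall a, g (f a) = a) /\ (forall b, f (g b) = b).

Definition fe_subset (A : Type) (k : nat) (f : Nk k -> A) : Type :=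
  {a : A | exists i, f i = a}.

Definition fe_subsets (A : Type) : Type := {k : nat & Nk k -> A}.

Record IndexFamilyAxioms (F : IndexFamily) : Prop := {
  ax_N : El F (cN F) = nat;
  ax_Nk : forall k, El F (cNk F k) = Nk k;
  ax_sub : forall (J : U F) (k : nat) (f : Nk k -> El F J),
      exists u : U F, iso (fe_subset f) (El F u);
  ax_pow : forall J : U F, exists u : U F, iso (fe_subsets (El F J)) (El F u);
  ax_sigma : forall (I : U F) (J : El F I -> U F),
      exists u : U F, iso {i : El F I & El F (J i)} (El F u)
}.

Inductive ord (F : IndexFamily) : Type :=
| OZero : ord F
| OSup : forall I : U F, (El F I -> ord F) -> ord F.

Arguments OZero {F}.

Definition Idx {F : IndexFamily} (a : ord F) : Type :=
  match a with OZero => Empty_set | @OSup _ J _ => El F J end.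

Definition subo {F : IndexFamily} (a : ord F) : Idx a -> ord F :=
  match a as a0 return Idx a0 -> ord F with
  | OZero => fun e => match e with end
  | @OSup _ J f => f
  end.

(* sel [b^1;...;b^m] cs  <->  cs = b^1_{F_1} ++ ... ++ b^m_{F_m}
   for some finite lists F_j of indices of I_{b^j}. *)
Inductive sel {F : IndexFamily} : list (ord F) -> list (ord F) -> Prop :=
| sel_nil : sel [] []
| sel_cons : forall (b : ord F) (bs : list (ord F)) (Fb : list (Idx b)) (rest : list (ord F)),
    sel bs rest -> sel (b :: bs) (map (subo b) Fb ++ rest).

(* alpha <= bs : for all i in I_alpha, alpha_i < bs, where
   alpha_i < bs : there are F_j, not all empty (i.e. the concatenated
   list is nonempty), with alpha_i <= concatenation. *)
Fixpoint ord_le {F : IndexFamily} (a : ord F) (bs : list (ord F)) : Prop :=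
  match a with
  | OZero => True
  | @OSup _ J f => forall i : El F J,
      exists cs, sel bs cs /\ cs <> [] /\ ord_le (f i) cs
  end.

Definition ord_lt {F : IndexFamily} (a : ord F) (bs : list (ord F)) : Prop :=
  exists cs, sel bs cs /\ cs <> [] /\ ord_le a cs.

Definition ord_eq {F : IndexFamily} (a b : ord F) : Prop :=
  ord_le a [b] /\ ord_le b [a].

Definition succ {F : IndexFamily} (b : ord F) : ord F :=
  OSup (cNk F 1) (fun _ => b).

Fixpoint nat_ord (F : IndexFamily) (n : nat) : ord F :=
  match n with
  | 0 => OZero
  | S m => succ (nat_ord F m)
  end.

(* Say that a has height at most n if every branch of its defining tree has
   length at most n.  Height at most n gives a <= n, and conversely, since
   selecting subordinals from finite ordinals below n only yields finite ordinals
   below n - 1, a <= n forces height at most n.  Classically, a tree whose height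
   is not at most n has a branch of length n + 1, which puts n + 1 below it.
   Hence, for the least n bounding the height of a, we get a =Ord n. *)
From Stdlib Require Import List Lia.
Import ListNotations.

Section FiniteOrdinals.

Context {F : IndexFamily}.

(* With the default guess [struct a], [height_le a 0] would not reduce. *)
Fixpoint height_le (a : ord F) (n : nat) {struct n} : Prop :=
  match n with
  | 0 => Idx a -> False
  | S n => forall i : Idx a, height_le (subo a i) n
  end.

Lemma sel_single (b : ord F) (i : Idx b) : sel [b] [subo b i].
Proof. exact (sel_cons b [i] sel_nil). Qed.

Lemma ord_lt_subo {x b : ord F} (i : Idx b) : ord_le x [subo b i] -> ord_lt x [b].
Proof.
  intro Hx. exists [subo b i]. split; [apply sel_single | split; [discriminate | exact Hx]].
Qed.

Definition finite_below (n : nat) (b : ord F) : Prop :=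
  exists k, k < n /\ b = nat_ord F k.

Lemma sel_finite_below {bs cs : list (ord F)} {n : nat} :
  sel bs cs -> Forall (finite_below (S n)) bs -> Forall (finite_below n) cs.
Proof.
  intros Hsel; induction Hsel as [|b bs Fb rest _ IH]; intro Hbs; [constructor|].
  inversion_clear Hbs as [|? ? [k [Hk Hb]] Hrest]; subst b.
  apply Forall_app; split; [|exact (IH Hrest)].
  apply Forall_forall. intros c Hc. apply in_map_iff in Hc as [i [<- _]].
  destruct k as [|k]; [destruct i|].
  exists k. split; [lia | reflexivity].
Qed.

Lemma ord_le_height_le (a : ord F) (bs : list (ord F)) (n : nat) :
  Forall (finite_below (S n)) bs -> ord_le a bs -> height_le a n.
Proof.
  revert bs n; induction a as [|J f IH]; intros bs n Hbs Hle.
  - destruct n; intros [].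
  - destruct n as [|n]; intro i; destruct (Hle i) as [cs [Hsel [Hne Hcs]]];
      pose proof (sel_finite_below Hsel Hbs) as Hfin.
    + destruct cs as [|c cs]; [contradiction|].
      inversion_clear Hfin as [|? ? [k [Hk _]] _]. lia.
    + exact (IH i cs n Hfin Hcs).
Qed.

Hypothesis HF : IndexFamilyAxioms F.

Definition idx_one : El F (cNk F 1).
Proof. rewrite (ax_Nk HF 1). exists 0. lia. Defined.

Lemma height_le_ord_le {a : ord F} {n : nat} : height_le a n -> ord_le a [nat_ord F n].
Proof.
  revert a; induction n as [|n IH]; intros [|J f] Ha; try exact I.
  - intro i. destruct (Ha i).
  - intro i. exact (ord_lt_subo (b := succ (nat_ord F n)) idx_one (IH (f i) (Ha i))).
Qed.

Hypothesis LEM : forall P : Prop, P \/ ~ P.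

Lemma not_forall_exists_not {A : Type} (P : A -> Prop) :
  ~ (forall x, P x) -> exists x, ~ P x.
Proof.
  intro Hnall. destruct (LEM (exists x, ~ P x)) as [Hex | Hnex]; [exact Hex|].
  exfalso. apply Hnall. intro x.
  destruct (LEM (P x)) as [Hx | Hnx]; [exact Hx|].
  exfalso. exact (Hnex (ex_intro _ x Hnx)).
Qed.

Lemma not_height_le_nat_ord_le {a : ord F} {n : nat} :
  ~ height_le a n -> ord_le (nat_ord F (S n)) [a].
Proof.
  revert a; induction n as [|n IH]; intros a Ha _.
  - destruct (not_forall_exists_not (fun _ : Idx a => False) Ha) as [i _].
    apply (ord_lt_subo i). exact I.
  - destruct (not_forall_exists_not _ Ha) as [i Hi].
    exact (ord_lt_subo i (IH (subo a i) Hi)).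
Qed.

End FiniteOrdinals.

Theorem corollary3p21 (F : IndexFamily) (HF : IndexFamilyAxioms F)
  (LEM : forall P : Prop, P \/ ~ P)
  (a : ord F) (m : nat) (Hb : ord_le a [nat_ord F m]) :
  exists n : nat, ord_eq a (nat_ord F n).
Proof.
  assert (Hm : height_le a m).
  { apply ord_le_height_le with (bs := [nat_ord F m]); [|exact Hb].
    repeat constructor. exists m. split; [lia | reflexivity]. }
  clear Hb. induction m as [|m IH].
  - exists 0. split; [exact (height_le_ord_le HF Hm) | exact I].
  - destruct (LEM (height_le a m)) as [Hm' | Hm']; [exact (IH Hm')|].
    exists (S m). split.
    + exact (height_le_ord_le HF Hm).
    + exact (not_height_le_nat_ord_le LEM Hm').
Qed.
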